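(* In the $q$-shuffle algebra $\mathbb V$ the following hold. (i) Each of the families $\{W_{-k}\}_{k\in\mathbb N}$, $\{W_{k+1}\}_{k\in\mathbb N}$, $\{G_{k+1}\}_{k\in\mathbb N}$, $\{\tilde G_{k+1}\}_{k\in\mathbb N}$ consists of mutually commuting elements (with respect to $\star$). (ii) An alternating word is of the form $W_{-k}$ ($k\in\mathbb N$) if and only if it commutes with $x$. (iii) An alternating word is of the form $W_{k+1}$ ($k\in\mathbb N$) if and only if it commutes with $y$. (iv) An alternating word is of the form $G_{k+1}$ ($k\in\mathbb N$) if and only if it commutes with $q\,y\star x-q^{-1}x\star y$. (v) An alternating word is of the form $\tilde G_{k+1}$ ($k\in\mathbb N$) if and only if it commutes with $q\,x\star y-q^{-1}y\star x$.
   Context: Let $\mathbb F$ be a field and let $q\in\mathbb F$ be nonzero and not a root of unity. Let $\mathbb V$ be the free associative $\mathbb F$-algebra on noncommuting $x,y$, with basis the words (including $1$). Juxtaposition denotes concatenation. Set $\langle x,x\rangle=\langle y,y\rangle=2$ and $\langle x,y\rangle=\langle y,x\rangle=-2$. The $q$-shuffle product $\star$ is the bilinear product determined as follows: - $1\star v=v\star 1=v$; - for nontrivial words $u=u_1\cdots u_r$ and $v=v_1\cdots v_s$, $$u\star v=u_1((u_2\cdots u_r)\star v)+v_1(u\star(v_2\cdots v_s))q^{\langle u_1,v_1\rangle+\cdots+\langle u_r,v_1\rangle}.$$ This makes $\mathbb V$ an associative algebra, the $q$-shuffle algebra. ''Commute'' means $a\star b=b\star a$. A word $v_1\cdots v_n$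 is alternating if $n\ge1$ and $v_{i-1}\ne v_i$ for $2\le i\le n$. For $k\in\mathbb N$: - $W_{-k}=xyx\cdots x$ is the alternating word of length $2k+1$ beginning and ending with $x$; - $W_{k+1}=yxy\cdots y$ is the alternating word of length $2k+1$ beginning and ending with $y$; - $G_{k+1}=yxyx\cdots yx$ is the word of length $2k+2$; - $\tilde G_{k+1}=xyxy\cdots xy$ is the word of length $2k+2$. Every alternating word is exactly one of these. *)

From HB Require Import structures.
From mathcomp Require Import all_boot all_order all_algebra.
Set Implicit Arguments. Unset Strict Implicit. Unset Printing Implicit Defensive.
Import Order.TTheory GRing.Theory Num.Theory.
Local Open Scope ring_scope.

Definition lx : bool := false.
Definition ly : bool := true.

Definition word := seq bool.

Definition bform (a b : bool) : int := if a == b then 2%:Z else - 2%:Z.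

Section QShuffle.
Variables (F : fieldType) (q : F).

(* Elements of the free algebra V are represented as finite formal linear
   combinations of words: a list of (coefficient, word) pairs.  Two
   representations denote the same element of V iff they have the same
   coefficient on every word (see [veq]). *)
Definition V := seq (F * word).

Definition coef (a : V) (w : word) : F := \sum_(p <- a | p.2 == w) p.1.

Definition veq (a b : V) : Prop := forall w : word, coef a w = coef b w.

Definition vword (w : word) : V := [:: (1, w)].
Definition vadd (a b : V) : V := a ++ b.
Definition vscale (c : F) (a : V) : V := [seq (c * p.1, p.2) | p <- a].

Definition vcons (c : F) (l : bool) (a : V) : V := [seq (c * p.1, l :: p.2) | p <- a].

Fixpoint wshuffle (u v : word) {struct u} : V :=
  match u with
  | [::] => vword v
  | u1 :: u' =>
      let fix g (v : word) : V :=
        match v with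
        | [::] => vword u
        | v1 :: v' =>
            vcons 1 u1 (wshuffle u' v) ++
            vcons (q ^ (\sum_(a <- u) bform a v1)) v1 (g v')
        end
      in g v
  end.

Definition vstar (a b : V) : V :=
  flatten [seq vscale (p.1 * r.1) (wshuffle p.2 r.2) | p <- a, r <- b].

Definition qcommute (a b : V) : Prop := veq (vstar a b) (vstar b a).

End QShuffle.

Definition altw (l : bool) (n : nat) : word := mkseq (fun i => l (+) odd i) n.

(* W_{-k} = xyx...x (length 2k+1) *)
Definition Wneg (k : nat) : word := altw lx (2 * k + 1).
(* W_{k+1} = yxy...y (length 2k+1) *)
Definition Wpos (k : nat) : word := altw ly (2 * k + 1).
(* G_{k+1} = yx...yx (length 2k+2) *)
Definition Gw (k : nat) : word := altw ly (2 * k + 2).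
(* tilde G_{k+1} = xy...xy (length 2k+2) *)
Definition Gtw (k : nat) : word := altw lx (2 * k + 2).

Definition alternating (w : word) : Prop :=
  (1 <= size w)%N /\
  forall i : nat, (1 <= i < size w)%N -> nth lx w i.-1 != nth lx w i.

(* Write [shuffle_coef q u v w] for the coefficient of the word [w] in
   [u ⋆ v]; splitting off the first letter of [w] gives a recursion on [w]
   that mirrors the recursive definition of the q-shuffle product.

   For the alternating words ending in x, these coefficients satisfy four
   linear relations, proved together by induction on [w]; two of them say that
   the W_{-k} commute and that the G_{k+1} commute. Swapping the letters x and
   y is an automorphism of the q-shuffle algebra and carries these to the
   W_{k+1} and the G~_{k+1}. Moreover q y⋆x - q^-1 x⋆y = (q - q^-3) yx, so
   (iv) and (v) are about commuting with the words yx and xy.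

   Conversely, every alternating word is of one of the four kinds, and a word
   of the wrong kind is told apart from x (resp. yx) by the coefficient of a
   word obtained by inserting the missing letters at its front (for W_{k+1}
   against yx, at its end). Both coefficients are powers of q times 1 + q^2;
   since q is not a root of unity, their equality forces an equation between
   integer exponents built from the weights <u, a> = 2 (#a - #(~a)) of u,
   and this equation has no solution. *)

From mathcomp Require Import all_boot all_order all_algebra.
From mathcomp Require Import ring zify.
Import GRing.Theory.
Local Open Scope ring_scope.
Set Implicit Arguments. Unset Strict Implicit.

Section Coefficients.
Variable F : fieldType.

Lemma coef_cat (a b : V F) w : coef (a ++ b) w = coef a w + coef b w.
Proof. by rewrite /coef big_cat. Qed.

Lemma coef_flatten (s : seq (V F)) w : coef (flatten s) w = \sum_(a <- s) coef a w.
Proof.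
elim: s => [|a s IH] /=; first by rewrite /coef !big_nil.
by rewrite coef_cat IH big_cons.
Qed.

Lemma coef_vword v w : coef (vword F v) w = if v == w then 1 else 0.
Proof. by rewrite /coef big_cons big_nil /= addr0; case: eqP. Qed.

Lemma coef_vscale c (a : V F) w : coef (vscale c a) w = c * coef a w.
Proof. by rewrite /coef /vscale big_map big_distrr. Qed.

Lemma coef_vcons c l (a : V F) w :
  coef (vcons c l a) w = if w is b :: w' then (if l == b then c * coef a w' else 0) else 0.
Proof.
rewrite /coef /vcons big_map; case: w => [|b w]; first by rewrite big1.
have [<-|nlb] := eqVneq l b.
  by rewrite big_distrr; apply: eq_bigl => p; rewrite /= eqseq_cons eqxx.
by rewrite big1 // => p; rewrite eqseq_cons (negbTE nlb).
Qed.

End Coefficients.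

Lemma bool_neqN (a : bool) : a != ~~ a.
Proof. by case: a. Qed.

Lemma bformxx a : bform a a = 2%:Z.
Proof. by case: a. Qed.

Lemma bformC a b : bform a b = bform b a.
Proof. by case: a; case: b. Qed.

Lemma bform_negb a b : bform (~~ a) (~~ b) = bform a b.
Proof. by case: a; case: b. Qed.

Lemma bform_negr a b : bform a (~~ b) = - bform a b.
Proof. by case: a; case: b. Qed.

Lemma bform_negl a b : bform (~~ a) b = - bform a b.
Proof. by case: a; case: b. Qed.

Lemma exprz_bform (F : unitRingType) (q : F) a b :
  q ^ bform a b = if a == b then q ^+ 2 else (q ^+ 2)^-1.
Proof. by case: a; case: b. Qed.

Definition weight (u : word) (b : bool) : int := \sum_(c <- u) bform c b.

Lemma weight_cons a u b : weight (a :: u) b = bform a b + weight u b.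
Proof. by rewrite /weight big_cons. Qed.

Lemma weight_nil b : weight [::] b = 0.
Proof. by rewrite /weight big_nil. Qed.

Lemma weight_count u b :
  weight u b = 2%:Z * ((count_mem b u)%:Z - (count_mem (~~ b) u)%:Z).
Proof.
elim: u => [|a u IH]; first by rewrite weight_nil.
rewrite weight_cons {}IH /= !PoszD.
by case: a; case: b; rewrite /bform /=; ring.
Qed.

Lemma weight_negb u b : weight (map negb u) (~~ b) = weight u b.
Proof. by rewrite /weight big_map; apply: eq_bigr => c _; rewrite bform_negb. Qed.

Lemma weight_negr u b : weight u (~~ b) = - weight u b.
Proof. by rewrite /weight -sumrN; apply: eq_bigr => c _; rewrite bform_negr. Qed.

Section ShuffleCoef.
Variables (F : fieldType) (q : F).

Fixpoint shuffle_coef (u v w : word) : F :=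
  match w with
  | [::] => if (u == [::]) && (v == [::]) then 1 else 0
  | a :: w' =>
     (if u is b :: u' then (if b == a then shuffle_coef u' v w' else 0) else 0) +
     (if v is b :: v' then (if b == a then q ^ weight u b * shuffle_coef u v' w' else 0) else 0)
  end.

Lemma shuffle_coef_cons u v a w : shuffle_coef u v (a :: w) =
  (if u is b :: u' then (if b == a then shuffle_coef u' v w else 0) else 0) +
  (if v is b :: v' then (if b == a then q ^ weight u b * shuffle_coef u v' w else 0) else 0).
Proof. by []. Qed.

Lemma shuffle_coef_nil u v : shuffle_coef u v [::] = if (u == [::]) && (v == [::]) then 1 else 0.
Proof. by []. Qed.

Lemma shuffle_coef_nil_l v w : shuffle_coef [::] v w = if v == w then 1 else 0.
Proof.
elim: w v => [|a w IH] [|b v] //=; rewrite ?add0r // weight_nil expr0z mul1r IH eqseq_cons.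
by case: (b == a).
Qed.

Lemma shuffle_coef_nil_r u w : shuffle_coef u [::] w = if u == w then 1 else 0.
Proof.
elim: w u => [|a w IH] [|b u] //=; rewrite ?addr0 // IH eqseq_cons.
by case: (b == a).
Qed.

Lemma wshuffle_cons u1 u v1 v : wshuffle q (u1 :: u) (v1 :: v) =
  vcons 1 u1 (wshuffle q u (v1 :: v)) ++
  vcons (q ^ weight (u1 :: u) v1) v1 (wshuffle q (u1 :: u) v).
Proof. by []. Qed.

Lemma coef_wshuffle u v w : coef (wshuffle q u v) w = shuffle_coef u v w.
Proof.
elim: w u v => [|a w IH] [|u1 u] [|v1 v];
  try by rewrite [wshuffle _ _ _]/= coef_vword ?shuffle_coef_nil_l ?shuffle_coef_nil_r.
- by rewrite wshuffle_cons coef_cat !coef_vcons addr0.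
- by rewrite wshuffle_cons coef_cat !coef_vcons !IH mul1r.
Qed.

Lemma coef_vstar (a b : V F) w :
  coef (vstar q a b) w = \sum_(s <- a) \sum_(r <- b) s.1 * r.1 * shuffle_coef s.2 r.2 w.
Proof.
rewrite /vstar coef_flatten; elim: a => [|s a IH] /=; first by rewrite !big_nil.
rewrite big_cat big_cons IH big_map; congr (_ + _); apply: eq_bigr => r _.
by rewrite coef_vscale coef_wshuffle.
Qed.

Definition words_commute (u v : word) := forall w, shuffle_coef u v w = shuffle_coef v u w.

Lemma qcommute_vword u v : qcommute q (vword F u) (vword F v) <-> words_commute u v.
Proof.
have E w u' v' : coef (vstar q (vword F u') (vword F v')) w = shuffle_coef u' v' w.
  by rewrite coef_vstar !big_cons !big_nil !addr0 !mul1r.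
by split=> H w; have := H w; rewrite !E.
Qed.

End ShuffleCoef.
Arguments shuffle_coef : simpl never.

Lemma shuffle_coef_negb (F : fieldType) (q : F) u v w :
  shuffle_coef q (map negb u) (map negb v) (map negb w) = shuffle_coef q u v w.
Proof.
elim: w u v => [|a w IH] u v; first by rewrite !shuffle_coef_nil; case: u; case: v.
rewrite map_cons !shuffle_coef_cons.
case: u => [|b u]; case: v => [|c v]; rewrite ?map_cons ?(inj_eq negb_inj) ?IH //.
all: by rewrite -?map_cons weight_negb ?IH.
Qed.

Lemma words_commute_negb (F : fieldType) (q : F) u v :
  words_commute q (map negb u) (map negb v) <-> words_commute q u v.
Proof.
split=> uv w; first by rewrite -!(shuffle_coef_negb q _ _ w) uv.
by rewrite -(mapK negbK w) !shuffle_coef_negb uv.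
Qed.

Section NotRootOfUnity.
Variables (F : fieldType) (q : F).
Hypotheses (q_neq0 : q != 0) (q_not_root : forall n : nat, (0 < n)%N -> q ^+ n != 1).

Lemma expfz_eq1 z : q ^ z = 1 -> z = 0.
Proof.
case: z => [[|n]|n] // /eqP; last by rewrite invr_eq1 (negbTE (q_not_root _)).
by rewrite (negbTE (q_not_root _)).
Qed.

Lemma expfz_inj : injective (exprz q).
Proof.
move=> m n E; apply/subr0_eq/expfz_eq1.
by rewrite expfzDr // -invr_expz E mulfV // expfz_neq0.
Qed.

(* The element is [(q - q^-3)] times the word [[:: a; ~~ a]]. *)
Lemma qcommute_qcommutator u a :
  qcommute q (vword F u)
    (vadd (vscale q (vstar q (vword F [:: a]) (vword F [:: ~~ a])))
          (vscale (- q^-1) (vstar q (vword F [:: ~~ a]) (vword F [:: a]))))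
  <-> words_commute q u [:: a; ~~ a].
Proof.
set Z := vadd _ _; pose c := q - (q ^+ 3)^-1.
have coefZ w : coef (vstar q (vword F u) Z) w = c * shuffle_coef q u [:: a; ~~ a] w /\
               coef (vstar q Z (vword F u)) w = c * shuffle_coef q [:: a; ~~ a] u w.
  rewrite !coef_vstar /Z /vword /vadd /vscale /vstar /=; clear Z.
  by rewrite /c; case: a; rewrite !big_cons !big_nil /= !addr0 !exprz_bform /=; split; field.
have c_neq0 : c != 0.
  by rewrite subr_eq0; apply/eqP => /(@expfz_inj 1 (- 3)).
rewrite /qcommute /veq; split=> uZ w; have [E1 E2] := coefZ w; move: (uZ w).
  by rewrite E1 E2 => /(mulfI c_neq0).
by rewrite E1 E2 => ->.
Qed.

End NotRootOfUnity.

(* The alternating word of length [m] whose last letter is x. *)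
Definition altx (m : nat) : word := altw (~~ odd m) m.

Lemma altw_cons l n : altw l n.+1 = l :: altw (~~ l) n.
Proof.
rewrite /altw /mkseq /= addbF; congr (_ :: _).
rewrite -[1%N]addn0 iotaDl -map_comp; apply: eq_map => i /=.
by rewrite add0n addbN negb_add.
Qed.

Lemma altx_cons m : altx m.+1 = odd m :: altx m.
Proof. by rewrite /altx altw_cons /= !negbK. Qed.

Lemma weight_altx m b : weight (altx m) b = if odd m then bform lx b else 0.
Proof.
elim: m => [|m IH]; first by rewrite weight_nil.
by rewrite altx_cons weight_cons {}IH /=; case: (odd m); case: b.
Qed.

Lemma map_negb_altw l n : map negb (altw l n) = altw (~~ l) n.
Proof. by rewrite /altw /mkseq -map_comp; apply: eq_map => i /=; rewrite addNb. Qed.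

Lemma Wneg_altx k : Wneg k = altx k.*2.+1.
Proof. by rewrite /Wneg /altx /= odd_double -mul2n addn1. Qed.

Lemma Gw_altx k : Gw k = altx k.*2.+2.
Proof. by rewrite /Gw /altx /= odd_double -mul2n addn2. Qed.

Lemma Wpos_negb k : Wpos k = map negb (Wneg k).
Proof. by rewrite /Wpos /Wneg map_negb_altw. Qed.

Lemma Gtw_negb k : Gtw k = map negb (Gw k).
Proof. by rewrite /Gtw /Gw map_negb_altw. Qed.

Lemma eq_from_scaled_diff (F : fieldType) (L R a b k : F) :
  L - R = k * (a - b) -> a = b -> L = R.
Proof. by move=> E ab; apply/subr0_eq; rewrite E ab subrr mulr0. Qed.

Section AltxShuffles.
Variables (F : fieldType) (q : F).
Hypothesis q_neq0 : q != 0.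

Let C i j w := shuffle_coef q (altx i) (altx j) w.

Let C_nil i j : C i j [::] = if (i == 0%N) && (j == 0%N) then 1 else 0.
Proof. by case: i => [|i]; case: j => [|j]; rewrite /C ?altx_cons. Qed.

Let C_cons i j a w : C i j (a :: w) =
  (if i is i'.+1 then (if odd i' == a then C i' j w else 0) else 0) +
  (if j is j'.+1 then
     (if odd j' == a then (if odd i then q ^ bform lx a else 1) * C i j' w else 0)
   else 0).
Proof.
rewrite /C shuffle_coef_cons; case: i => [|i]; case: j => [|j]; rewrite ?altx_cons //.
- by rewrite weight_altx.
- by rewrite -(altx_cons i) weight_altx; case: (odd j =P a) => // ->; case: (odd i.+1).
Qed.

Let C_0l j w : C 0 j w = C j 0 w.
Proof. by rewrite /C shuffle_coef_nil_l shuffle_coef_nil_r. Qed.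

(* Only the first two relations are used later; the other two are needed to
   carry the induction on [w]. *)
Lemma altx_shuffle_relations w :
  [/\ forall i j, C i.*2.+1 j.*2.+1 w = C j.*2.+1 i.*2.+1 w,
      forall i j, C i.*2 j.*2 w = C j.*2 i.*2 w,
      forall i j, q * C i.*2.+1 j.*2 w - q^-1 * C j.*2 i.*2.+1 w =
                  q * C j.*2.+1 i.*2 w - q^-1 * C i.*2 j.*2.+1 w &
      forall i j, C i.*2.+1 j.*2.+2 w - C j.*2.+2 i.*2.+1 w =
                  C j.*2.+1 i.*2.+2 w - C i.*2.+2 j.*2.+1 w].
Proof.
elim: w => [|a w [IHodd IHeven IHmix IHmix2]].
  split=> i j; rewrite !C_nil /= ?andbF //.
  by case: i => [|i]; case: j => [|j].
split.
- move=> i j; rewrite !C_cons !exprz_bform /lx /= !odd_double /=.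
  case: a => /=; first by rewrite !addr0.
  by apply: (eq_from_scaled_diff (k := - q) _ (IHmix j i)); field.
- case=> [|i] [|j]; rewrite ?C_0l // !doubleS !C_cons !exprz_bform /lx /= ?odd_double /=.
  case: a => /=; last by rewrite !addr0.
  by apply: (eq_from_scaled_diff (k := 1) _ (IHmix2 i j)); ring.
- case=> [|i] [|j]; rewrite ?doubleS !C_cons !exprz_bform /lx /= ?odd_double /=; case: a => //=.
  + by rewrite (IHodd 0 j); field.
  + by have := IHeven 0 j.+1; rewrite doubleS => ->; ring.
  + by rewrite (IHodd 0 i); field.
  + by have := IHeven i.+1 0; rewrite doubleS => ->; ring.
  + have := IHodd i.+1 j; have := IHodd j.+1 i; rewrite !doubleS => -> ->.
    by field.
  + by have := IHeven i.+1 j.+1; rewrite !doubleS => ->; ring.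
- move=> i j; rewrite !C_cons !exprz_bform /lx /= !odd_double /=; case: a => /=.
  + by rewrite (IHodd i j); field.
  + have := IHeven i j.+1; have := IHeven j i.+1; rewrite !doubleS => -> ->.
    by ring.
Qed.

Lemma Wneg_commute k l : words_commute q (Wneg k) (Wneg l).
Proof.
move=> w; rewrite !Wneg_altx; case: (altx_shuffle_relations w) => odd_rel _ _ _.
exact: odd_rel.
Qed.

Lemma Gw_commute k l : words_commute q (Gw k) (Gw l).
Proof.
move=> w; rewrite !Gw_altx; case: (altx_shuffle_relations w) => _ even_rel _ _.
by have := even_rel k.+1 l.+1; rewrite !doubleS.
Qed.

Lemma Wpos_commute k l : words_commute q (Wpos k) (Wpos l).
Proof. by rewrite !Wpos_negb; apply/words_commute_negb/Wneg_commute. Qed.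

Lemma Gtw_commute k l : words_commute q (Gtw k) (Gtw l).
Proof. by rewrite !Gtw_negb; apply/words_commute_negb/Gw_commute. Qed.

End AltxShuffles.

Lemma size_altw l n : size (altw l n) = n.
Proof. by rewrite size_mkseq. Qed.

Lemma head_altw l n : head l (altw l n) = l.
Proof. by case: n => [|n] //; rewrite altw_cons. Qed.

Lemma last_altw l n : last (~~ l) (altw l n.*2) = ~~ l.
Proof.
case: n => [|n] //; rewrite -nth_last size_altw /altw nth_mkseq //.
by rewrite doubleS /= odd_double addbT.
Qed.

Lemma Wneg_cons k : Wneg k = lx :: altw ly k.*2.
Proof. by rewrite /Wneg mul2n addn1 altw_cons. Qed.

Lemma Wpos_cons k : Wpos k = ly :: altw lx k.*2.
Proof. by rewrite /Wpos mul2n addn1 altw_cons. Qed.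

Lemma Gw_cons k : Gw k = [:: ly, lx & altw ly k.*2].
Proof. by rewrite /Gw mul2n addn2 !altw_cons. Qed.

Lemma Gtw_cons k : Gtw k = lx :: Wpos k.
Proof. by rewrite /Gtw /Wpos addn2 addn1 altw_cons. Qed.

Lemma weight_altw_double l k b : weight (altw l k.*2) b = 0.
Proof.
elim: k => [|k IH]; first exact: weight_nil.
by rewrite doubleS !altw_cons negbK !weight_cons IH bform_negl addr0 addrN.
Qed.

Lemma weight_Wpos k : weight (Wpos k) lx = - 2%:Z.
Proof. by rewrite Wpos_cons weight_cons weight_altw_double addr0. Qed.

Lemma exists_map_negb (f g : nat -> word) : (forall k, f k = map negb (g k)) ->
  forall w, (exists k, w = f k) <-> (exists k, map negb w = g k).
Proof.
move=> fg w; split=> [] [k wk]; exists k; first by rewrite wk fg (mapK negbK).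
by rewrite fg -wk (mapK negbK).
Qed.

Lemma alternating_map_negb w : alternating w -> alternating (map negb w).
Proof.
case=> w_gt0 alt; split=> [|i]; rewrite size_map // => /andP[i_gt0 i_lt].
have i1_lt : (i.-1 < size w)%N by apply: leq_ltn_trans (leq_pred i) i_lt.
by rewrite !(nth_map lx) // (inj_eq negb_inj) alt // i_gt0.
Qed.

Lemma alternating_altw w : alternating w -> w = altw (head lx w) (size w).
Proof.
case=> w_gt0 alt; apply: (@eq_from_nth _ lx); first by rewrite size_altw.
elim=> [|i IH] i_lt; rewrite /altw nth_mkseq //=.
  by rewrite addbF; case: w {w_gt0 alt i_lt}.
have := alt i.+1; rewrite i_lt => /(_ isT).
rewrite (IH (ltnW i_lt)) /altw nth_mkseq ?(ltnW i_lt) //.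
by case: (nth lx w i.+1); case: (head lx w); case: (odd i).
Qed.

Lemma alternating_cases w : alternating w ->
  exists k, [\/ w = Wneg k, w = Wpos k, w = Gw k | w = Gtw k].
Proof.
move=> aw; rewrite (alternating_altw aw); case: aw; case: (size w) => // n _ _.
exists n./2; rewrite /Wneg /Wpos /Gw /Gtw mul2n addn1 addn2.
have -> : n.+1 = (n./2.*2 + odd n).+1 by rewrite addnC odd_double_half.
case: (odd n); case: (head lx w); rewrite ?addn1 ?addn0.
- by constructor 3.
- by constructor 4.
- by constructor 2.
- by constructor 1.
Qed.

Section LetterInsertion.
Variables (F : fieldType) (q : F).
Hypothesis q_neq0 : q != 0.

Lemma shuffle_coef_peel_l c u v w : head (~~ c) v != c ->
  shuffle_coef q (c :: u) v (c :: w) = shuffle_coef q u v w.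
Proof. by case: v => [|d v] hv; rewrite shuffle_coef_cons eqxx ?(negbTE hv) addr0. Qed.

Lemma shuffle_coef_peel_r c u v w : head (~~ c) u != c ->
  shuffle_coef q u (c :: v) (c :: w) = q ^ weight u c * shuffle_coef q u v w.
Proof. by case: u => [|d u] hu; rewrite shuffle_coef_cons eqxx ?(negbTE hu) add0r. Qed.

Lemma shuffle_coef_front_l a b : head (~~ a) b != a ->
  shuffle_coef q [:: a] b (a :: b) = 1.
Proof. by move=> hb; rewrite shuffle_coef_peel_l // shuffle_coef_nil_l eqxx. Qed.

Lemma shuffle_coef_front_r a b : head (~~ a) b != a ->
  shuffle_coef q b [:: a] (a :: b) = q ^ weight b a.
Proof. by move=> hb; rewrite shuffle_coef_peel_r // shuffle_coef_nil_r eqxx mulr1. Qed.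

Lemma shuffle_coef_front2_l a b : head (~~ a) b != a ->
  shuffle_coef q [:: a] (a :: b) [:: a, a & b] = 1 + q ^+ 2.
Proof.
move=> hb; rewrite shuffle_coef_cons eqxx shuffle_coef_nil_l eqxx shuffle_coef_front_l //.
by rewrite weight_cons weight_nil addr0 mulr1 exprz_bform eqxx.
Qed.

Lemma shuffle_coef_front2_r a b : head (~~ a) b != a ->
  shuffle_coef q (a :: b) [:: a] [:: a, a & b] = q ^ weight b a * (1 + q ^+ 2).
Proof.
move=> hb; rewrite shuffle_coef_cons eqxx shuffle_coef_front_r // shuffle_coef_nil_r eqxx.
by rewrite weight_cons expfzDr // mulr1 exprz_bform eqxx; ring.
Qed.

Let last_cons_neq a d b : last (~~ a) (d :: b) != a ->
  (d :: b == rcons b a) = false /\ last (~~ a) b != a.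
Proof.
move=> hb; split; first by apply/negP => /eqP E; move: hb; rewrite E last_rcons eqxx.
by case: b hb => [|e b] //= _; case: a.
Qed.

Lemma shuffle_coef_rcons_l a b : last (~~ a) b != a ->
  shuffle_coef q b [:: a] (rcons b a) = 1.
Proof.
elim: b => [|d b IH] hb; first by rewrite shuffle_coef_nil_l eqxx.
have [E hb'] := last_cons_neq hb.
by rewrite rcons_cons shuffle_coef_cons eqxx IH // shuffle_coef_nil_r E mulr0 if_same addr0.
Qed.

Lemma shuffle_coef_rcons_r a b : last (~~ a) b != a ->
  shuffle_coef q [:: a] b (rcons b a) = q ^ weight b a.
Proof.
elim: b => [|d b IH] hb; first by rewrite shuffle_coef_nil_r eqxx weight_nil expr0z.
have [E hb'] := last_cons_neq hb.
rewrite rcons_cons shuffle_coef_cons eqxx IH // shuffle_coef_nil_l E if_same add0r.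
by rewrite [weight (d :: b) a]weight_cons expfzDr // bformC weight_cons weight_nil addr0.
Qed.

End LetterInsertion.

Section NonCommuting.
Variables (F : fieldType) (q : F).
Hypotheses (q_neq0 : q != 0) (q_not_root : forall n : nat, (0 < n)%N -> q ^+ n != 1).

Let q_inj := expfz_inj q_neq0 q_not_root.
Let q_eq1 := expfz_eq1 q_not_root.

Lemma add1q2_neq0 : 1 + q ^+ 2 != 0.
Proof.
apply/eqP => q2; have /eqP := q_not_root (isT : 0 < 4)%N; apply.
have -> : q ^+ 4 = (1 + q ^+ 2) * (q ^+ 2 - 1) + 1 by ring.
by rewrite q2 mul0r add0r.
Qed.

Lemma commute_letter_weight u a : head (~~ a) u != a ->
  words_commute q u [:: a] -> weight u a = 0.
Proof.
move=> hu /(_ (a :: u)); rewrite shuffle_coef_front_r // shuffle_coef_front_l //.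
exact: q_eq1.
Qed.

Lemma commute_cons_letter_weight b a : head (~~ a) b != a ->
  words_commute q (a :: b) [:: a] -> weight b a = 0.
Proof.
move=> hb /(_ [:: a, a & b]); rewrite shuffle_coef_front2_r // shuffle_coef_front2_l //.
by rewrite -{2}[1 + _]mul1r => /(mulIf add1q2_neq0)/q_eq1; apply.
Qed.

Lemma not_commute_letter b a : head (~~ a) b != a ->
  ~ words_commute q [:: ~~ a, a & b] [:: a].
Proof.
move=> hb comm; have := comm [:: ~~ a, a, a & b].
have ha : head (~~ ~~ a) [:: a] != ~~ a := bool_neqN a.
rewrite shuffle_coef_peel_l // (@shuffle_coef_peel_r _ _ (~~ a) [:: a]) //.
rewrite shuffle_coef_front2_l // shuffle_coef_front2_r // => /(mulIf add1q2_neq0)/q_inj.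
have /commute_letter_weight/(_ comm) : head (~~ a) [:: ~~ a, a & b] != a.
  by rewrite eq_sym bool_neqN.
rewrite !weight_cons weight_nil bform_negl bform_negr !bformxx.
lia.
Qed.

Lemma not_commute_cons_pair b a : head (~~ a) b != a ->
  ~ words_commute q (a :: b) [:: ~~ a; a].
Proof.
move=> hb /(_ [:: ~~ a, a, a & b]).
rewrite shuffle_coef_peel_r ?bool_neqN // (@shuffle_coef_peel_l _ _ (~~ a)) ?bool_neqN //.
rewrite shuffle_coef_front2_r // shuffle_coef_front2_l // mulrA -expfzDr //.
rewrite -{2}[1 + _]mul1r => /(mulIf add1q2_neq0)/q_eq1.
rewrite weight_cons weight_negr bform_negr bformxx.
lia.
Qed.

Lemma not_commute_pair b a : head (~~ a) b != a -> last a b != ~~ a ->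
  ~ words_commute q (a :: b) [:: a; ~~ a].
Proof.
move=> hb hl /(_ [:: a, a & rcons b (~~ a)]).
have hl' : last (~~ ~~ a) b != ~~ a by rewrite negbK.
have hNa : head (~~ a) [:: ~~ a] != a by rewrite eq_sym bool_neqN.
have -> : shuffle_coef q (a :: b) [:: a; ~~ a] [:: a, a & rcons b (~~ a)] =
          q ^ weight b a * (1 + q ^+ 2).
  rewrite shuffle_coef_cons eqxx shuffle_coef_peel_r // shuffle_coef_peel_l //.
  rewrite shuffle_coef_rcons_l // weight_cons expfzDr // exprz_bform eqxx.
  ring.
have -> : shuffle_coef q [:: a; ~~ a] (a :: b) [:: a, a & rcons b (~~ a)] =
          q ^ (- weight b a - 2) * (1 + q ^+ 2).
  rewrite shuffle_coef_cons eqxx shuffle_coef_peel_r // shuffle_coef_peel_l //.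
  rewrite shuffle_coef_rcons_r // weight_negr !weight_cons weight_nil bform_negl bformxx.
  by rewrite addr0 subrr expr0z mul1r expfzDr // -exprnN; field.
move/(mulIf add1q2_neq0)/q_inj; rewrite weight_count.
lia.
Qed.

Lemma Wpos_not_commute_x k : ~ words_commute q (Wpos k) [:: lx].
Proof. by move/commute_letter_weight; rewrite weight_Wpos Wpos_cons => /(_ isT). Qed.

Lemma Gtw_not_commute_x k : ~ words_commute q (Gtw k) [:: lx].
Proof.
by rewrite Gtw_cons => /commute_cons_letter_weight; rewrite weight_Wpos Wpos_cons => /(_ isT).
Qed.

Lemma Gw_not_commute_x k : ~ words_commute q (Gw k) [:: lx].
Proof. by rewrite Gw_cons; apply: (@not_commute_letter _ lx); rewrite head_altw. Qed.

Lemma Wneg_not_commute_yx k : ~ words_commute q (Wneg k) [:: ly; lx].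
Proof. by rewrite Wneg_cons; apply: (@not_commute_cons_pair _ lx); rewrite head_altw. Qed.

Lemma Gtw_not_commute_yx k : ~ words_commute q (Gtw k) [:: ly; lx].
Proof. by rewrite Gtw_cons Wpos_cons; apply: (@not_commute_cons_pair _ lx). Qed.

Lemma Wpos_not_commute_yx k : ~ words_commute q (Wpos k) [:: ly; lx].
Proof.
rewrite Wpos_cons; apply: (@not_commute_pair _ ly).
  by rewrite (head_altw lx).
by rewrite (last_altw lx).
Qed.

Lemma alternating_commute_x w : alternating w ->
  (exists k, w = Wneg k) <-> words_commute q w [:: lx].
Proof.
case/alternating_cases=> k wk; split=> [[l ->]|comm]; first exact: Wneg_commute q_neq0 l 0.
case: wk => wk; subst w; first by exists k.
- by case: (Wpos_not_commute_x comm).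
- by case: (Gw_not_commute_x comm).
- by case: (Gtw_not_commute_x comm).
Qed.

Lemma alternating_commute_yx w : alternating w ->
  (exists k, w = Gw k) <-> words_commute q w [:: ly; lx].
Proof.
case/alternating_cases=> k wk; split=> [[l ->]|comm]; first exact: Gw_commute q_neq0 l 0.
case: wk => wk; subst w.
- by case: (Wneg_not_commute_yx comm).
- by case: (Wpos_not_commute_yx comm).
- by exists k.
- by case: (Gtw_not_commute_yx comm).
Qed.

Lemma alternating_commute_y w : alternating w ->
  (exists k, w = Wpos k) <-> words_commute q w [:: ly].
Proof.
move=> aw; rewrite (exists_map_negb Wpos_negb) -(words_commute_negb q w).
exact: alternating_commute_x (alternating_map_negb aw).
Qed.

Lemma alternating_commute_xy w : alternating w ->
  (exists k, w = Gtw k) <-> words_commute q w [:: lx; ly].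
Proof.
move=> aw; rewrite (exists_map_negb Gtw_negb) -(words_commute_negb q w).
exact: alternating_commute_yx (alternating_map_negb aw).
Qed.

End NonCommuting.

Theorem lemma5p12 (F : fieldType) (q : F)
  (hq0 : q != 0) (hq : forall n : nat, (0 < n)%N -> q ^+ n != 1) :
  let X := vword F [:: lx] in
  let Y := vword F [:: ly] in
  let star := vstar q in
  let comm := qcommute q in
  (* (i) *)
  ((forall k l : nat, comm (vword F (Wneg k)) (vword F (Wneg l))) /\
   (forall k l : nat, comm (vword F (Wpos k)) (vword F (Wpos l))) /\
   (forall k l : nat, comm (vword F (Gw k)) (vword F (Gw l))) /\
   (forall k l : nat, comm (vword F (Gtw k)) (vword F (Gtw l)))) /\
  (* (ii) *)
  (forall w : word, alternating w ->
     ((exists k : nat, w = Wneg k) <-> comm (vword F w) X)) /\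
  (* (iii) *)
  (forall w : word, alternating w ->
     ((exists k : nat, w = Wpos k) <-> comm (vword F w) Y)) /\
  (* (iv) *)
  (forall w : word, alternating w ->
     ((exists k : nat, w = Gw k) <->
      comm (vword F w) (vadd (vscale q (star Y X)) (vscale (- q^-1) (star X Y))))) /\
  (* (v) *)
  (forall w : word, alternating w ->
     ((exists k : nat, w = Gtw k) <->
      comm (vword F w) (vadd (vscale q (star X Y)) (vscale (- q^-1) (star Y X))))).
Proof.
move=> X Y star comm.
split; first by split; [|split; [|split]] => k l; apply/qcommute_vword;
  [exact: Wneg_commute | exact: Wpos_commute | exact: Gw_commute | exact: Gtw_commute].
split; [|split; [|split]] => w aw.
- exact: iff_trans (alternating_commute_x hq0 hq aw) (iff_sym (qcommute_vword q w [:: lx])).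
- exact: iff_trans (alternating_commute_y hq0 hq aw) (iff_sym (qcommute_vword q w [:: ly])).
- exact: iff_trans (alternating_commute_yx hq0 hq aw) (iff_sym (qcommute_qcommutator hq0 hq w ly)).
- exact: iff_trans (alternating_commute_xy hq0 hq aw) (iff_sym (qcommute_qcommutator hq0 hq w lx)).
Qed.
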